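(* Let $P(\lambda)$ be a complex $n\times n$ matrix polynomial of degree $d$ and normal rank $n-k$ such that all its eigenvalues are semisimple. Let $Q_1(\lambda),Q_2(\lambda)$ be regular $k\times k$ matrix polynomials of degree $d$ whose $2dk$ eigenvalues are pairwise distinct. Let $U,V\in\mathbb C^{n\times k}$ have orthonormal columns such that the augmented matrix polynomial $$P_a(\lambda)=\begin{bmatrix}P(\lambda)& UQ_1(\lambda)\\ Q_2(\lambda)V^*&0\end{bmatrix}$$ is regular, and such that $(U,V)$ is admissible for $P$ with respect to some regular $k\times k$ matrix polynomial $Q(\lambda)$ of degree $d$ with simple eigenvalues distinct from those of $P$ (see context). Then $P_a(\lambda)$ has the following eigenvalues: (a) $2dk$ prescribed eigenvalues, which are precisely the eigenvalues of $Q_1(\lambda)$ and $Q_2(\lambda)$; (b) the random eigenvalues of $\widetilde P(\lambda)=P(\lambda)+\tau UQ(\lambda)V^*$ with the same $U$ and $V$; (c) the true eigenvalues of $P(\lambda)$.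
   Context: Normal rank: $\mathrm{nrank}(P)=\max_{\zeta}\mathrm{rank}\,P(\zeta)$; a square matrix polynomial is regular if $\det\not\equiv0$. Finite eigenvalues of $P$: $\lambda_0\in\mathbb C$ with $\mathrm{rank}\,P(\lambda_0)<\mathrm{nrank}(P)$; $\infty$ is an eigenvalue if $0$ is an eigenvalue of $\lambda^dP(1/\lambda)$. Algebraic multiplicity of $\lambda_0$ is the sum of exponents of $(\lambda-\lambda_0)$ in the nonzero invariant polynomials of the Smith form, geometric multiplicity the number of those exponents that are nonzero; semisimple means they coincide, simple means algebraic multiplicity 1. Right/left minimal indices are the degrees of a minimal-total-degree polynomial basis of the right/left rational nullspace of $P$; let $M$, $N$ be their respective sums. Admissibility: $(U,V)$ is admissible for $P$ with respect to $Q$ if for all $\tau>0$ the polynomial $\widetilde P(\lambda)=P(\lambda)+\tau UQ(\lambda)V^*$ is regular and its $nd$ eigenvalues are independent of $\tau$ and split into: (a) true eigenvalues: every eigenvalue $\lambda_0$ of $P$ is an eigenvalue of $\widetilde P$ with corresponding right/left eigenvectors satisfying $V^*x=0$, $U^*y=0$, there being $(n-k)d-M-N$ of them; (b) $M$ simple right random eigenvalues, distinct from those in (a) and from eigenvalues of $Q$, with $V^*x=0$, $U^*y\neq0$; (c) $N$ simple left random eigenvalues, distinct from those in (a),(b) and of $Q$, with $V^*x\neq0$, $U^*y=0$; (d) the $kd$ eigenvalues of $Q$, with $V^*x\neq0$, $U^*y\neq0$. The random eigenvalues are those of groups (b) and (c); the true eigenvalues of $P$ are its eigenvalues. *)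

(* Complex matrix polynomials over an arbitrary
   numClosedFieldType C (which includes the complex numbers). *)
From HB Require Import structures.
From mathcomp Require Import all_boot all_order all_algebra.
From Stdlib Require Import ClassicalEpsilon.

Set Implicit Arguments.
Unset Strict Implicit.
Unset Printing Implicit Defensive.

Import Order.TTheory GRing.Theory Num.Theory.
Local Open Scope ring_scope.

Section MatrixPolynomials.
Variable C : numClosedFieldType.

Definition pbool (P : Prop) : bool :=
  if excluded_middle_informative P then true else false.

Definition adjmx m n (A : 'M[C]_(m, n)) : 'M[C]_(n, m) := (map_mx Num.conj A)^T.

Definition cmx m n (A : 'M[C]_(m, n)) : 'M[{poly C}]_(m, n) := map_mx polyC A.

Definition peval m n (P : 'M[{poly C}]_(m, n)) (z : C) : 'M[C]_(m, n) :=
  map_mx (fun p : {poly C} => p.[z]) P.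

Definition mxdeg_is m n (P : 'M[{poly C}]_(m, n)) (d : nat) : Prop :=
  (\max_(i < m) \max_(j < n) size (P i j))%N = d.+1.

(* reversal  lambda^d P(1/lambda)  (entries are of degree <= d) *)
Definition revmx (d : nat) m n (P : 'M[{poly C}]_(m, n)) : 'M[{poly C}]_(m, n) :=
  map_mx (fun p : {poly C} => \poly_(l < d.+1) p`_(d - l)) P.

Definition nrank m n (P : 'M[{poly C}]_(m, n)) : nat :=
  (\max_(i < m.+1 | pbool (exists z : C, \rank (peval P z) = i)) i)%N.

Definition regular n (P : 'M[{poly C}]_n) : Prop := \det P != 0.

Definition unimodular n (E : 'M[{poly C}]_n) : Prop := \det E \is a GRing.unit.

Definition diag_seq m n (s : seq {poly C}) : 'M[{poly C}]_(m, n) :=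
  \matrix_(i < m, j < n) if (i == j :> nat) then s`_i else 0.

Definition smith_invariants m n (P : 'M[{poly C}]_(m, n)) (s : seq {poly C}) : Prop :=
  exists (E : 'M[{poly C}]_m) (F : 'M[{poly C}]_n),
    [/\ unimodular E, unimodular F, P = E *m diag_seq m n s *m F,
        (size s <= minn m n)%N
      & all (fun p => p \is monic) s && sorted (fun p q => p %| q) s].

Definition invpolys m n (P : 'M[{poly C}]_(m, n)) : seq {poly C} :=
  epsilon (inhabits [::]) (smith_invariants P).

Definition alg_mult m n (P : 'M[{poly C}]_(m, n)) (z : C) : nat :=
  (\sum_(p <- invpolys P) mup z p)%N.
Definition geo_mult m n (P : 'M[{poly C}]_(m, n)) (z : C) : nat :=
  count (fun p => root p z) (invpolys P).

(* ---- extended eigenvalues: Some z = finite z, None = infinity ---- *)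
Definition ext_eval (d : nat) m n (P : 'M[{poly C}]_(m, n)) (e : option C) : 'M[C]_(m, n) :=
  match e with Some z => peval P z | None => peval (revmx d P) 0 end.

Definition pm_eigenvalue (d : nat) m n (P : 'M[{poly C}]_(m, n)) (e : option C) : Prop :=
  match e with
  | Some z => (\rank (peval P z) < nrank P)%N
  | None => (\rank (peval (revmx d P) 0) < nrank (revmx d P))%N
  end.

Definition mult (d : nat) m n (P : 'M[{poly C}]_(m, n)) (e : option C) : nat :=
  match e with Some z => alg_mult P z | None => alg_mult (revmx d P) 0 end.

Definition gmult (d : nat) m n (P : 'M[{poly C}]_(m, n)) (e : option C) : nat :=
  match e with Some z => geo_mult P z | None => geo_mult (revmx d P) 0 end.

Definition semisimple (d : nat) m n (P : 'M[{poly C}]_(m, n)) (e : option C) : Prop :=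
  mult d P e = gmult d P e.

Definition reigvec (d : nat) n (P : 'M[{poly C}]_n) (e : option C) (x : 'cV[C]_n) : Prop :=
  x != 0 /\ ext_eval d P e *m x = 0.
Definition leigvec (d : nat) n (P : 'M[{poly C}]_n) (e : option C) (y : 'cV[C]_n) : Prop :=
  y != 0 /\ adjmx y *m ext_eval d P e = 0.

Definition sum_coldeg n c (B : 'M[{poly C}]_(n, c)) : nat :=
  (\sum_(j < c) (\max_(i < n) size (B i j)).-1)%N.

Definition rnull_basis m n (P : 'M[{poly C}]_(m, n)) (B : 'M[{poly C}]_(n, n - nrank P)) : Prop :=
  P *m B = 0 /\ nrank B = (n - nrank P)%N.

Arguments rnull_basis {m n} P B.

Definition is_rminsum m n (P : 'M[{poly C}]_(m, n)) (M : nat) : Prop :=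
  (exists B, rnull_basis P B /\ sum_coldeg B = M) /\
  (forall B, rnull_basis P B -> (M <= sum_coldeg B)%N).

Definition rminsum m n (P : 'M[{poly C}]_(m, n)) : nat :=
  epsilon (inhabits 0%N) (is_rminsum P).
Definition lminsum m n (P : 'M[{poly C}]_(m, n)) : nat := rminsum P^T.

Definition ptilde n k (P : 'M[{poly C}]_n) (U V : 'M[C]_(n, k)) (Q : 'M[{poly C}]_k)
  (tau : C) : 'M[{poly C}]_n :=
  P + cmx (tau *: U) *m Q *m cmx (adjmx V).

(* the split (a)-(d) of the eigenvalues of P~ for a given tau; Rr / Rl are
   the right / left random eigenvalues *)
Definition adm_split (d : nat) n k (P : 'M[{poly C}]_n) (U V : 'M[C]_(n, k))
  (Q : 'M[{poly C}]_k) (tau : C) (Rr Rl : seq (option C)) : Prop :=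
  let Pt := ptilde P U V Q tau in
  [/\ (uniq Rr /\ size Rr = rminsum P) /\ (uniq Rl /\ size Rl = lminsum P) /\
      (forall e, mult d Pt e = (mult d P e + (e \in Rr) + (e \in Rl) + mult d Q e)%N),
      (exists s : seq (option C), (forall e, mult d P e = count_mem e s) /\
          size s = (nrank P * d - rminsum P - lminsum P)%N) /\
      (forall e, pm_eigenvalue d P e ->
          pm_eigenvalue d Pt e /\
          (forall x, reigvec d Pt e x -> adjmx V *m x = 0) /\
          (forall y, leigvec d Pt e y -> adjmx U *m y = 0)),
      (forall e, e \in Rr ->
          [/\ mult d P e = 0%N, mult d Q e = 0%N, mult d Pt e = 1%N,
              (forall x, reigvec d Pt e x -> adjmx V *m x = 0)
            & (forall y, leigvec d Pt e y -> adjmx U *m y != 0)]),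
      (forall e, e \in Rl ->
          [/\ mult d P e = 0%N, mult d Q e = 0%N /\ e \notin Rr, mult d Pt e = 1%N,
              (forall x, reigvec d Pt e x -> adjmx V *m x != 0)
            & (forall y, leigvec d Pt e y -> adjmx U *m y = 0)])
    &
      (forall e, (0 < mult d Q e)%N ->
          (forall x, reigvec d Pt e x -> adjmx V *m x != 0) /\
          (forall y, leigvec d Pt e y -> adjmx U *m y != 0))].

Definition admissible (d : nat) n k (P : 'M[{poly C}]_n) (U V : 'M[C]_(n, k))
  (Q : 'M[{poly C}]_k) : Prop :=
  [/\ (forall tau : C, 0 < tau -> regular (ptilde P U V Q tau)),
      (forall tau1 tau2 : C, 0 < tau1 -> 0 < tau2 -> forall e,
          mult d (ptilde P U V Q tau1) e = mult d (ptilde P U V Q tau2) e)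
    & (forall tau : C, 0 < tau -> exists Rr Rl, adm_split d P U V Q tau Rr Rl)].

Definition augmented n k (P : 'M[{poly C}]_n) (U V : 'M[C]_(n, k))
  (Q1 Q2 : 'M[{poly C}]_k) : 'M[{poly C}]_(n + k) :=
  block_mx P (cmx U *m Q1) (Q2 *m cmx (adjmx V)) 0.

End MatrixPolynomials.

From HB Require Import structures.
From mathcomp Require Import all_boot all_order all_algebra.
From mathcomp Require Import perm zify.
From Stdlib Require Import ClassicalEpsilon.
Import Order.TTheory GRing.Theory Num.Theory.
Local Open Scope ring_scope.

Set Implicit Arguments.
Unset Strict Implicit.
Unset Printing Implicit Defensive.

(* Since rank P(z) <= n - k for every z, the bordered determinant identity
     det (P + U S W) = (-1)^k det S det [P U; W 0]      (S an invertible k x k matrix)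
   holds pointwise.  With S = tau Q(z), W = V^* and the factorisation
     P_a = diag(I, Q2) [P U; V^* 0] diag(I, Q1)
   it yields the polynomial identity
     (-1)^k tau^k det P_a det Q = det Q1 det Q2 det P~.
   By the Smith form, the algebraic multiplicity of a finite eigenvalue of a regular
   matrix polynomial is its multiplicity as a root of the determinant, so comparing
   root multiplicities gives mult P_a + mult Q = mult Q1 + mult Q2 + mult P~; the same
   argument on the reversals at 0 handles the eigenvalue infinity.  Admissibility then
   splits mult P~ into mult P, the random eigenvalues and mult Q. *)

Section LowRankDeterminant.
Variable F : fieldType.

Lemma dsubmx_ebase_rank m k (P : 'M[F]_(m + k)) :
  (\rank P <= m)%N -> dsubmx (invmx (col_ebase P) *m P) = 0.
Proof.
move=> rkP; rewrite -{2}(mulmx_ebase P) !mulmxA mulVmx ?col_ebase_unit // mul1mx.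
apply/matrixP => i j; rewrite !mxE big1 // => l _; rewrite mxE.
suff /negbTE -> : ~~ (rshift m i < \rank P)%N by rewrite andbF mul0r.
by rewrite -leqNgt /= (leq_trans rkP) // leq_addr.
Qed.

Lemma det_block_col0_dr0 m k (A : 'M[F]_(m, m + k)) (B1 : 'M_(m, k)) (B2 : 'M_k)
    (W : 'M_(k, m + k)) (T : 'M_k) :
  \det (block_mx (col_mx A 0) (col_mx B1 B2) W T) =
  \det (block_mx (col_mx A 0) (col_mx B1 B2) W 0).
Proof.
have [/eqP/det0P [v nz_v vB2] | nz_B2] := eqVneq (\det B2) 0.
  suff det0 T' : \det (block_mx (col_mx A 0) (col_mx B1 B2) W T') = 0 by rewrite !det0.
  apply/eqP/det0P; exists (row_mx (row_mx 0 v) 0).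
    by apply: contra nz_v; rewrite !row_mx_eq0 => /andP[/andP[_ ->] _].
  by rewrite mul_row_block !mul_row_col !mulmx0 !mul0mx vB2 !addr0 row_mx0.
(* clearing [T'] with the adjugate of [B2] rescales [W] but leaves no trace of [T'] *)
suff detE T' : \det (block_mx (col_mx A 0) (col_mx B1 B2) W T') =
    (\det B2 ^+ k)^-1 * \det (block_mx (col_mx A 0) (col_mx B1 B2) (\det B2 *: W) 0).
  by rewrite !detE.
pose G := block_mx (1%:M : 'M_(m + k)) 0 (row_mx 0 (- (T' *m \adj B2))) (\det B2)%:M.
have detG : \det G = \det B2 ^+ k by rewrite det_lblock det1 det_scalar mul1r.
have GE : G *m block_mx (col_mx A 0) (col_mx B1 B2) W T' =
    block_mx (col_mx A 0) (col_mx B1 B2) (\det B2 *: W) 0.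
  rewrite mulmx_block !mul1mx !mul0mx !addr0 !mul_row_col !mulmx0 !mul0mx !add0r.
  by rewrite !mul_scalar_mx mulNmx -mulmxA mul_adj_mx mul_mx_scalar addNr.
by rewrite -GE det_mulmx detG mulrA mulVf ?mul1r // expf_neq0.
Qed.

Lemma det_block_dr0 m k (P : 'M[F]_(m + k)) (U : 'M_(m + k, k)) (W : 'M_(k, m + k))
    (T : 'M_k) :
  (\rank P <= m)%N -> \det (block_mx P U W T) = \det (block_mx P U W 0).
Proof.
move=> rkP; set L := invmx (col_ebase P).
have nz_L : \det L != 0 by rewrite -unitfE -unitmxE unitmx_inv col_ebase_unit.
pose G := block_mx L 0 0 (1%:M : 'M_k).
have detG : \det G = \det L by rewrite det_ublock det1 mulr1.
suff detGE T' : \det G * \det (block_mx P U W T') =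
    \det (block_mx (col_mx (usubmx (L *m P)) 0)
                   (col_mx (usubmx (L *m U)) (dsubmx (L *m U))) W T').
  by apply: (mulfI nz_L); rewrite -detG !detGE det_block_col0_dr0.
rewrite -det_mulmx mulmx_block !mul0mx !mul1mx !addr0 !add0r.
by rewrite -(dsubmx_ebase_rank rkP) !vsubmxK.
Qed.

Lemma det_lowrank_update m k (P : 'M[F]_(m + k)) (U : 'M_(m + k, k)) (W : 'M_(k, m + k))
    (S : 'M_k) :
  (\rank P <= m)%N -> S \in unitmx ->
  \det (P + U *m S *m W) = (-1) ^+ k * \det S * \det (block_mx P U W 0).
Proof.
move=> rkP uS; have nz_S : \det S != 0 by rewrite -unitfE -unitmxE.
have factor : block_mx P U W (- invmx S) =
    block_mx 1%:M (U *m - S) 0 1%:M *m block_mx (P + U *m S *m W) 0 W (- invmx S).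
  rewrite mulmx_block !mul1mx !mul0mx !add0r !mulmxN !mulNmx opprK addrK.
  by rewrite -mulmxA mulmxV // mulmx1.
rewrite -(det_block_dr0 U W (- invmx S) rkP) factor det_mulmx det_ublock !det1 mul1r.
rewrite det_lblock -scaleN1r detZ det_inv mul1r.
have sign2 : (-1) ^+ k * (-1) ^+ k = 1 :> F by rewrite -exprMn mulrN1 opprK expr1n.
by rewrite [RHS]mulrC -mulrA mulrACA sign2 mulVf // mulr1 mulr1.
Qed.

End LowRankDeterminant.

Section SmithForm.
Variable F : fieldType.
Local Notation R := {poly F}.

(* convertible to [diag_seq m n d] when [F] is [C] *)
Definition rdiag_mx m n (d : seq R) : 'M[R]_(m, n) :=
  \matrix_(i, j) if i == j :> nat then d`_i else 0.

Definition smith_form m n (M : 'M[R]_(m, n)) : Prop :=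
  exists L Rm d, [/\ L \in unitmx, Rm \in unitmx, sorted (@dvdp F) d
                   & M = L *m rdiag_mx m n d *m Rm].

Lemma smith_formM m n (M : 'M[R]_(m, n)) L Rm :
  L \in unitmx -> Rm \in unitmx -> smith_form M -> smith_form (L *m M *m Rm).
Proof.
move=> uL uR [L' [R' [d [uL' uR' sd ->]]]].
exists (L *m L'), (R' *m Rm), d; split; rewrite ?unitmx_mul ?uL ?uR ?uL' ?uR' //.
by rewrite !mulmxA.
Qed.

Lemma smith_formMl m n (M : 'M[R]_(m, n)) L :
  L \in unitmx -> smith_form (L *m M) -> smith_form M.
Proof.
move=> uL /(@smith_formM _ _ _ (invmx L) 1%:M).
by rewrite unitmx_inv uL unitmx1 mulmx1 mulmxA mulVmx // mul1mx; apply.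
Qed.

Lemma smith_formMr m n (M : 'M[R]_(m, n)) Rm :
  Rm \in unitmx -> smith_form (M *m Rm) -> smith_form M.
Proof.
move=> uR /(@smith_formM _ _ _ 1%:M (invmx Rm)).
by rewrite unitmx_inv uR unitmx1 mul1mx mulmxK //; apply.
Qed.

Lemma smith_form0 m n : smith_form (0 : 'M[R]_(m, n)).
Proof.
exists 1%:M, 1%:M, [::]; split; rewrite ?unitmx1 //.
by apply/matrixP => i j; rewrite mulmx1 mul1mx !mxE nth_nil; case: eqP.
Qed.

Lemma smith_form_tr m n (M : 'M[R]_(m, n)) : smith_form M^T -> smith_form M.
Proof.
case=> L [Rm [d [uL uR sd dM]]]; exists Rm^T, L^T, d; split; rewrite ?unitmx_tr //.
rewrite -[M]trmxK dM !trmx_mul mulmxA; congr (_ *m _ *m _).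
by apply/matrixP=> i j; rewrite !mxE eq_sym; case: eqP => // ->.
Qed.

Lemma smith_formZ m n a (M : 'M[R]_(m, n)) :
  a != 0 -> smith_form M -> smith_form (a *: M).
Proof.
move=> nz_a [L [Rm [d [uL uR sd ->]]]]; exists L, Rm, [seq a * x | x <- d]; split=> //.
  by rewrite sorted_map; apply: sub_sorted sd => x y; rewrite /= dvdp_mul2l.
rewrite scalemxAl scalemxAr; congr (_ *m _ *m _); apply/matrixP => i j.
rewrite !mxE; case: eqP => _; rewrite ?mulr0 //.
have [lt_id | le_di] := ltnP i (size d); first by rewrite (nth_map 0).
by rewrite !nth_default ?size_map ?mulr0.
Qed.

Lemma smith_form_unit_pivot m n (M : 'M[R]_(1 + m, 1 + n)) :
  ulsubmx M = 1 -> smith_form (drsubmx M - dlsubmx M *m ursubmx M) -> smith_form M.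
Proof.
move=> M00 [L [Rm [d [uL uR sd dS]]]].
exists (block_mx 1 0 (dlsubmx M) L), (block_mx 1 (ursubmx M) 0 Rm), (1 :: d); split.
- by rewrite unitmxE det_lblock det_scalar1 mul1r.
- by rewrite unitmxE det_ublock det_scalar1 mul1r.
- by rewrite /= path_min_sorted //; apply/allP => g _; apply: dvd1p.
rewrite [rdiag_mx _ _ _](_ : _ = block_mx 1 0 0 (rdiag_mx m n d)); last first.
  by apply/matrixP=> i j; do 3?[rewrite ?mxE ?ord1 //=; case: splitP => ? ->].
rewrite !mulmx_block !(mul0mx, mulmx0, addr0) !mulmx1 add0r mul1mx -M00 -dS.
by rewrite addrC subrK submxK.
Qed.

Lemma pivot_size_decr_col1 m n (M : 'M[R]_(m, 2 + n)) i :
  M i 0 != 0 -> ~~ (M i 0 %| M i 1) ->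
  exists2 U, U \in unitmx &
    (M *m U) i 0 != 0 /\ (size ((M *m U) i 0%R) < size (M i 0%R))%N.
Proof.
set a := M i 0; set a1 := M i 1 => nz_a a'a1.
pose u := (egcdp a a1).1; pose v := (egcdp a a1).2; pose b := u * a + v * a1.
have bE : gcdp a a1 %= b by exact: egcdpE.
have dvd_ba : b %| a by rewrite -(eqp_dvdl _ bE) dvdp_gcdl.
have dvd_ba1 : b %| a1 by rewrite -(eqp_dvdl _ bE) dvdp_gcdr.
have nz_b : b != 0 by apply: contraNneq nz_a => b0; move: dvd_ba; rewrite b0 dvd0p.
pose t2 := [fun j : 'I_2 => [tuple _; _]`_j : R].
pose Uul := \matrix_(k, j) t2 (t2 u (- (a1 %/ b)) j) (t2 v (a %/ b) j) k.
exists (block_mx Uul 0 0 1%:M).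
  rewrite unitmxE det_ublock det1 (expand_det_col _ 0) big_ord_recl big_ord1.
  do 2!rewrite /cofactor [row' _ _]mx11_scalar !mxE det_scalar1 /=.
  rewrite mulr1 mul1r mulN1r opprK.
  suff -> : u * (a %/ b) + v * (a1 %/ b) = 1 by rewrite unitr1.
  by apply: (mulIf nz_b); rewrite mul1r mulrDl -!mulrA !divpK.
have -> : (M *m block_mx Uul 0 0 1%:M) i 0 = b.
  rewrite -(lshift0 n 1) [block_mx _ _ _ _]block_mxEh mul_mx_row row_mxEl.
  rewrite -[M](@hsubmxK _ _ 2) (@mul_row_col _ _ 2) mulmx0 addr0 !mxE /=.
  rewrite big_ord_recl big_ord1 !mxE /= [lshift _ _]((_ =P 0) _) // -/a.
  by rewrite [lshift _ _]((_ =P 1) _) // -/a1 /b mulrC (mulrC v).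
split=> //; rewrite -(eqp_size bE) ltn_neqAle leq_gcdpl // andbT.
apply: contra a'a1 => /eqP eq_size.
have : gcdp a a1 %= a by rewrite -dvdp_size_eqp ?dvdp_gcdl // eq_size.
by move/eqp_dvdl => <-; rewrite dvdp_gcdr.
Qed.

Lemma pivot_size_decr m n (M : 'M[R]_(m, 1 + n)) i j :
  M i 0 != 0 -> ~~ (M i 0 %| M i j) ->
  exists2 U, U \in unitmx &
    (M *m U) i 0 != 0 /\ (size ((M *m U) i 0%R) < size (M i 0%R))%N.
Proof.
move=> nz_a a'aj; have nz_j : j != 0 by apply: contraNneq a'aj => ->; rewrite dvdpp.
case: n j nz_j M a'aj nz_a => [|n] j nz_j M a'aj nz_a; first by rewrite ord1 eqxx in nz_j.
have := @pivot_size_decr_col1 m n (xcol j 1 M) i; rewrite !mxE tpermR tpermD //.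
case/(_ nz_a a'aj) => U uU.
exists (tperm_mx j 1 *m U); first by rewrite unitmx_mul unitmx_perm.
by rewrite mulmxA -xcolE.
Qed.

Lemma pivot_row_fill m n (M : 'M[R]_(m, 1 + n)) i :
  M i 0 != 0 -> (forall j, M i 0 %| M i j) ->
  exists2 U, U \in unitmx & forall j, (M *m U) i j = M i 0.
Proof.
set a := M i 0 => nz_a dvd_a.
pose U : 'M_(1 + n) := block_mx 1 (\row_j (1 - M i (rshift 1 j) %/ a)) 0 1%:M.
exists U => [|j]; first by rewrite unitmxE det_ublock !det1 mulr1 unitr1.
rewrite -[M](@hsubmxK _ _ 1 n) [U]block_mxEv mul_row_col !mul_mx_row mulmx0 !mulmx1.
rewrite add_row_mx addr0 -[j](splitK j); case: (split j) => j' /=.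
  by rewrite row_mxEl mxE ord1 lshift0.
rewrite row_mxEr !mxE big_ord1 !mxE lshift0 -/a mulrBr mulr1 mulrC divpK //.
by rewrite subrK.
Qed.

Lemma smith_form_pivot_dvd m n (M : 'M[R]_(1 + m, 1 + n)) :
  (forall M' : 'M[R]_(m, n), smith_form M') ->
  M 0 0 != 0 -> (forall i j, M 0 0 %| M i j) -> smith_form M.
Proof.
set a := M 0 0 => IH nz_a dvd_a; pose M1 := map_mx (fun x => x %/ a) M.
have -> : M = a *: M1 by apply/matrixP=> i j; rewrite !mxE mulrC divpK.
apply: smith_formZ (nz_a) _; apply: smith_form_unit_pivot (IH _).
rewrite [ulsubmx _]mx11_scalar !mxE.
have -> : M (lshift m 0) (lshift n 0) = a by congr (M _ _); apply/val_inj.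
by rewrite divpp.
Qed.

Lemma smith_form_pivot m n (M : 'M[R]_(1 + m, 1 + n)) i :
  (forall M' : 'M[R]_(m, n), smith_form M') -> M i 0 != 0 -> smith_form M.
Proof.
have [A] := ubnP (size (M i 0)); elim: A => // A IHA in m n M i *.
rewrite ltnS => leA IH nz_a.
have reduce m' n' (M' : 'M[R]_(1 + m', 1 + n')) i' j :
    (forall M'' : 'M[R]_(m', n'), smith_form M'') -> (size (M' i' 0%R) <= A)%N ->
    M' i' 0 != 0 -> ~~ (M' i' 0 %| M' i' j) -> smith_form M'.
  move=> IH' le' nz' ndvd; have [U uU [nzU ltU]] := pivot_size_decr nz' ndvd.
  exact: smith_formMr uU (IHA _ _ _ _ (leq_trans ltU le') IH' nzU).
case: (pickP (fun j => ~~ (M i 0 %| M i j))) => [j ndvd | /(_ _)/negbFE dvd_row].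
  exact: reduce _ _ _ _ _ IH leA nz_a ndvd.
wlog Di : i M leA nz_a dvd_row / i = 0; last subst i.
  move=> /(_ 0 (xrow i 0 M)); rewrite !mxE tpermR => H.
  apply: (@smith_formMl _ _ _ (tperm_mx i 0)); first exact: unitmx_perm.
  by rewrite -xrowE; apply: H => // j; rewrite !mxE tpermR.
have [U uU rowU] := pivot_row_fill nz_a dvd_row; apply: smith_formMr uU _.
set M1 := M *m U in rowU *.
case: (pickP (fun kl => ~~ (M1 0 0 %| M1 kl.1 kl.2))) => [[k l] ndvd | dvd_all].
  (* a non-multiple of the pivot off its row lies in the pivot row of the transpose *)
  have M1T j j' : M1^T j j' = M1 j' j by rewrite mxE.
  apply: smith_form_tr; apply: (reduce _ _ _ l k); rewrite ?M1T ?rowU //.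
  - by move=> M'; apply: smith_form_tr.
  - by rewrite -(rowU 0).
apply: (smith_form_pivot_dvd IH) => [|k l]; first by rewrite rowU.
exact: negbFE (dvd_all (k, l)).
Qed.

Theorem smith_form_exists m n (M : 'M[R]_(m, n)) : smith_form M.
Proof.
elim: m n M => [|m IHm] n M; first by rewrite flatmx0; apply: smith_form0.
case: n M => [|n] M; first by rewrite thinmx0; apply: smith_form0.
case: (pickP (fun ij => M ij.1 ij.2 != 0)) => [[i j] /= nz_ij | M0].
  apply: (@smith_formMr _ _ _ (tperm_mx j 0)); first exact: unitmx_perm.
  rewrite -xcolE; apply: (@smith_form_pivot m n _ i) (IHm n) _; by rewrite mxE tpermR.
suff -> : M = 0 by apply: smith_form0.
by apply/matrixP => i j; rewrite mxE; apply/eqP/negbFE/(M0 (i, j)).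
Qed.

Lemma det_rdiag_mx n (d : seq R) : \det (rdiag_mx n n d) = \prod_(i < n) d`_i.
Proof.
rewrite (_ : rdiag_mx n n d = diag_mx (\row_i d`_i)) ?det_diag.
  by apply: eq_bigr => i _; rewrite mxE.
by apply/matrixP => i j; rewrite !mxE -val_eqE /=; case: eqP.
Qed.

Lemma rdiag_mx_monic n (d : seq R) : (forall i : 'I_n, d`_i != 0) ->
  rdiag_mx n n d = rdiag_mx n n [seq (lead_coef x)^-1 *: x | x <- d] *m
                   diag_mx (\row_i (lead_coef d`_i)%:P).
Proof.
move=> nz_d; rewrite mul_mx_diag; apply/matrixP => i j; rewrite !mxE.
case: eqP => [/val_inj <- | _]; rewrite ?mul0r //.
rewrite (nth_map 0); last first.
  by rewrite ltnNge; apply: contra (nz_d i) => /(nth_default 0) ->.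
by rewrite -mul_polyC mulrAC -polyCM mulVf ?mul1r ?lead_coef_eq0.
Qed.

Theorem smith_normal_form n (M : 'M[R]_n) : \det M != 0 ->
  exists L Rm s, [/\ L \in unitmx, Rm \in unitmx, M = L *m rdiag_mx n n s *m Rm,
                    size s <= n & all (fun p => p \is monic) s && sorted (@dvdp F) s]%N.
Proof.
move=> nz_M; have [L [Rm [d [uL uR sd dM]]]] := smith_form_exists M.
have nz_d (i : 'I_n) : d`_i != 0.
  apply: contraNneq nz_M => di0.
  by rewrite dM !det_mulmx det_rdiag_mx (bigD1 i) //= di0 mul0r mulr0 mul0r.
pose c := \row_(i < n) (lead_coef d`_i)%:P.
exists L, (diag_mx c *m Rm), [seq (lead_coef x)^-1 *: x | x <- take n d]; split=> //.
- rewrite unitmx_mul uR andbT unitmxE det_diag; apply: unitr_prod => i _.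
  by rewrite mxE poly_unitE size_polyC coefC unitfE lead_coef_eq0 nz_d.
- rewrite dM mulmxA; congr (_ *m _); rewrite -mulmxA; congr (_ *m _).
  rewrite (rdiag_mx_monic nz_d); congr (_ *m _); apply/matrixP => i j.
  by rewrite !mxE map_take nth_take.
- by rewrite size_map size_take_min geq_minl.
apply/andP; split.
  apply/(all_nthP 0) => i; rewrite size_map size_take_min leq_min => /andP[lt_in lt_id].
  rewrite (nth_map 0) ?size_take_min ?leq_min ?lt_in // nth_take //.
  by rewrite monicE lead_coefZ mulVf // lead_coef_eq0 (nz_d (Ordinal lt_in)).
rewrite sorted_map; apply: sub_sorted (take_sorted n sd) => x y /=.
have [->|nz_x] := eqVneq x 0; first by rewrite dvd0p => /eqP ->; rewrite !scaler0.
have [->|nz_y] := eqVneq y 0; first by rewrite scaler0 dvdp0.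
by rewrite dvdpZl ?dvdpZr ?invr_eq0 ?lead_coef_eq0.
Qed.

End SmithForm.

Section AlgebraicMultiplicity.
Variable F : fieldType.

Lemma mup_unit (p : {poly F}) z : p \is a GRing.unit -> mup z p = 0%N.
Proof.
rewrite poly_unitE => /andP[/eqP sz_p c_unit].
by apply: mupNroot; rewrite (size1_polyC (eq_leq sz_p)) rootC -unitfE.
Qed.

Lemma mup_prod (s : seq {poly F}) z : \prod_(p <- s) p != 0 ->
  mup z (\prod_(p <- s) p) = (\sum_(p <- s) mup z p)%N.
Proof.
elim: s => [|p s IHs]; first by rewrite !big_nil mupNroot ?root1.
by rewrite !big_cons mulf_eq0 negb_or => /andP[nz_p nz_s]; rewrite mupM // IHs.
Qed.

Lemma mup_det_rdiag n (L Rm : 'M[{poly F}]_n) s z :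
  L \in unitmx -> Rm \in unitmx -> (size s <= n)%N ->
  \det (L *m rdiag_mx n n s *m Rm) != 0 ->
  mup z (\det (L *m rdiag_mx n n s *m Rm)) = (\sum_(p <- s) mup z p)%N.
Proof.
rewrite !unitmxE !det_mulmx det_rdiag_mx => uL uR le_sn.
have [lt_sn | le_ns] := ltnP (size s) n.
  by rewrite (bigD1 (Ordinal lt_sn)) //= nth_default // mul0r mulr0 mul0r eqxx.
have eq_sn : size s = n by apply/eqP; rewrite eqn_leq le_sn le_ns.
rewrite (_ : \prod_(i < n) s`_i = \prod_(p <- s) p); last first.
  by rewrite (big_nth 0) big_mkord eq_sn.
move=> nz; have := nz; rewrite !mulf_eq0 !negb_or => /andP[/andP[nz_L nz_s] nz_R].
by rewrite !mupM ?mulf_neq0 // (mup_unit z uL) (mup_unit z uR) addn0 mup_prod.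
Qed.

End AlgebraicMultiplicity.

Lemma poly_eq0_horner (R : numDomainType) (p : {poly R}) :
  (forall x, p.[x] = 0) -> p = 0.
Proof.
move=> p0; apply: (@roots_geq_poly_eq0 _ p [seq i%:R | i <- iota 0 (size p)]).
- by apply/allP => x _; apply/rootP.
- by rewrite map_inj_uniq ?iota_uniq // => i j /eqP; rewrite eqr_nat => /eqP.
- by rewrite size_map size_iota.
Qed.

Lemma eq_poly_off_roots (R : numDomainType) (p q r : {poly R}) :
  r != 0 -> (forall x, ~~ root r x -> p.[x] = q.[x]) -> p = q.
Proof.
move=> nz_r pq; apply/eqP; rewrite -subr_eq0.
suff /eqP : (p - q) * r = 0 by rewrite mulf_eq0 (negPf nz_r) orbF.
apply: poly_eq0_horner => x; rewrite hornerM hornerD hornerN.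
have [/rootP -> | /pq ->] := boolP (root r x); first by rewrite mulr0.
by rewrite subrr mul0r.
Qed.

Section Reversal.
Variable F : fieldType.

Definition revp (d : nat) (p : {poly F}) : {poly F} := \poly_(l < d.+1) p`_(d - l).

Lemma revpD d : {morph revp d : p q / p + q}.
Proof.
by move=> p q; apply/polyP => i; rewrite coefD !coef_poly; case: ifP; rewrite ?coefD ?addr0.
Qed.

Lemma revp0 d : revp d 0 = 0.
Proof. by apply/polyP => i; rewrite coef_poly coef0; case: ifP; rewrite ?coef0. Qed.

Lemma revp_sum d I (r : seq I) (P : I -> {poly F}) :
  revp d (\sum_(i <- r) P i) = \sum_(i <- r) revp d (P i).
Proof. exact: (big_morph _ (revpD d) (revp0 d)). Qed.

Lemma revpCM d c (p : {poly F}) : revp d (c%:P * p) = c%:P * revp d p.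
Proof.
by apply/polyP => i; rewrite !mul_polyC coefZ !coef_poly; case: ifP; rewrite ?coefZ ?mulr0.
Qed.

Lemma horner_revp d (p : {poly F}) (z : F) : (size p <= d.+1)%N -> z != 0 ->
  (revp d p).[z] = z ^+ d * p.[z^-1].
Proof.
move=> le_pd nz_z; rewrite horner_poly (horner_coef_wide _ le_pd) mulr_sumr.
rewrite (reindex_inj rev_ord_inj) /=; apply: eq_bigr => i _.
have le_id : (i <= d)%N := ltnSE (ltn_ord i).
rewrite subSS subKn // mulrCA exprVn -[in z ^+ d](subnK le_id) exprD mulrK //.
by rewrite unitfE expf_neq0.
Qed.

End Reversal.

Section AugmentedMatrixPolynomial.
Variable C : numClosedFieldType.
Implicit Types (d m n k : nat) (z tau : C).

Lemma smith_invariants_exists n (M : 'M[{poly C}]_n) :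
  regular M -> exists s, smith_invariants M s.
Proof.
move=> regM; have [L [Rm [s [uL uR dM le_sn ms]]]] := smith_normal_form regM.
by exists s, L, Rm; split; rewrite /unimodular -?unitmxE ?minnn.
Qed.

Lemma alg_mult_det n (M : 'M[{poly C}]_n) z :
  regular M -> alg_mult M z = mup z (\det M).
Proof.
move=> regM; rewrite /alg_mult /invpolys.
have [L [Rm [uL uR dM le_sn _]]] :=
  epsilon_spec (inhabits [::]) _ (smith_invariants_exists regM).
rewrite minnn in le_sn; rewrite /unimodular -!unitmxE in uL uR.
set s := epsilon _ _ in dM le_sn *.
by move: regM; rewrite /regular dM => nz; rewrite (mup_det_rdiag z uL uR).
Qed.

Lemma pevalD m n (A B : 'M[{poly C}]_(m, n)) z :
  peval (A + B) z = peval A z + peval B z.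
Proof. exact: (map_mxD (horner_eval z)). Qed.

Lemma pevalM m n p (A : 'M[{poly C}]_(m, n)) (B : 'M_(n, p)) z :
  peval (A *m B) z = peval A z *m peval B z.
Proof. exact: (map_mxM (horner_eval z)). Qed.

Lemma peval_cmx m n (A : 'M[C]_(m, n)) z : peval (cmx A) z = A.
Proof. by apply/matrixP => i j; rewrite !mxE hornerC. Qed.

Lemma horner_det n (A : 'M[{poly C}]_n) z : (\det A).[z] = \det (peval A z).
Proof. by rewrite -[LHS]horner_evalE -det_map_mx. Qed.

Lemma rank_peval_le_nrank m n (A : 'M[{poly C}]_(m, n)) z :
  (\rank (peval A z) <= nrank A)%N.
Proof.
have lt_rk : (\rank (peval A z) < m.+1)%N by rewrite ltnS rank_leq_row.
apply: leq_trans (leq_bigmax_cond (Ordinal lt_rk) _) => //.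
by rewrite /pbool; case: excluded_middle_informative => // [[]]; exists z.
Qed.

Definition bordered_mx n k (P : 'M[{poly C}]_n) (U V : 'M[C]_(n, k)) :=
  block_mx P (cmx U) (cmx (adjmx V)) 0.

Lemma peval_bordered n k (P : 'M[{poly C}]_n) (U V : 'M[C]_(n, k)) z :
  peval (bordered_mx P U V) z = block_mx (peval P z) U (adjmx V) 0.
Proof.
rewrite /bordered_mx /peval map_block_mx.
by congr block_mx; apply/matrixP => i j; rewrite !mxE ?hornerC ?horner0.
Qed.

Lemma det_augmented n k (P : 'M[{poly C}]_n) (U V : 'M[C]_(n, k)) Q1 Q2 :
  \det (augmented P U V Q1 Q2) = \det Q2 * \det (bordered_mx P U V) * \det Q1.
Proof.
have -> : augmented P U V Q1 Q2 =
    block_mx 1%:M 0 0 Q2 *m bordered_mx P U V *m block_mx 1%:M 0 0 Q1.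
  by rewrite !mulmx_block !(mul1mx, mul0mx, mulmx0, mulmx1, addr0, add0r).
by rewrite !det_mulmx !det_ublock !det1 !mul1r.
Qed.

Lemma det_ptilde m k (P : 'M[{poly C}]_(m + k)) (U V : 'M[C]_(m + k, k)) Q tau r :
  r != 0 -> (forall z, ~~ root r z -> \rank (peval P z) <= m)%N ->
  regular Q -> tau != 0 ->
  \det (ptilde P U V Q tau) =
  ((-1) ^+ k * tau ^+ k)%:P * \det Q * \det (bordered_mx P U V).
Proof.
move=> nz_r rkP regQ nz_tau; apply: (@eq_poly_off_roots _ _ _ (r * \det Q)).
  by rewrite mulf_neq0.
move=> z; rewrite rootM negb_or => /andP[/rkP rkPz /rootPf Qz].
rewrite !hornerM hornerC !horner_det /ptilde pevalD !pevalM !peval_cmx.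
rewrite -scalemxAl scalemxAr det_lowrank_update //.
  by rewrite peval_bordered detZ mulrA.
by rewrite unitmxE detZ unitfE mulf_neq0 ?expf_neq0 // -horner_det Qz.
Qed.

Lemma alg_mult_augmented m k (P : 'M[{poly C}]_(m + k)) (U V : 'M[C]_(m + k, k))
    Q1 Q2 Q tau r z :
  r != 0 -> (forall w, ~~ root r w -> \rank (peval P w) <= m)%N ->
  regular (augmented P U V Q1 Q2) -> regular Q -> tau != 0 ->
  (alg_mult (augmented P U V Q1 Q2) z + alg_mult Q z =
   alg_mult Q1 z + alg_mult Q2 z + alg_mult (ptilde P U V Q tau) z)%N.
Proof.
move=> nz_r rkP regPa regQ nz_tau; have detPt := det_ptilde U V nz_r rkP regQ nz_tau.
have := regPa; rewrite /regular det_augmented !mulf_eq0 !negb_or.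
case/andP=> /andP[regQ2 nz_B] regQ1.
have nz_c : (-1) ^+ k * tau ^+ k != 0 :> C by rewrite mulf_neq0 ?signr_eq0 ?expf_neq0.
have regPt : regular (ptilde P U V Q tau) by rewrite /regular detPt !mulf_neq0 ?polyC_eq0.
rewrite !alg_mult_det // det_augmented detPt !mupM ?mulf_neq0 ?polyC_eq0 //.
rewrite (mupNroot (x := z) (q := _%:P)) ?rootC //; lia.
Qed.

Definition mxdeg_leq d m n (M : 'M[{poly C}]_(m, n)) : Prop :=
  forall i j, (size (M i j) <= d.+1)%N.

Lemma mxdeg_is_leq d m n (M : 'M[{poly C}]_(m, n)) : mxdeg_is M d -> mxdeg_leq d M.
Proof.
by move=> degM i j; rewrite -degM; apply: leq_trans (leq_bigmax j) (leq_bigmax i).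
Qed.

Lemma mxdeg_leq_cmxl d m n p (X : 'M[C]_(m, n)) (B : 'M_(n, p)) :
  mxdeg_leq d B -> mxdeg_leq d (cmx X *m B).
Proof.
move=> degB i j; rewrite !mxE; apply: leq_trans (size_sum _ _ _) _.
apply/bigmax_leqP_seq => l _ _.
by rewrite mxE mul_polyC (leq_trans (size_scale_leq _ _)).
Qed.

Lemma mxdeg_leq_cmxr d m n p (B : 'M[{poly C}]_(m, n)) (X : 'M[C]_(n, p)) :
  mxdeg_leq d B -> mxdeg_leq d (B *m cmx X).
Proof.
move=> degB i j; rewrite !mxE; apply: leq_trans (size_sum _ _ _) _.
apply/bigmax_leqP_seq => l _ _.
by rewrite mxE mulrC mul_polyC (leq_trans (size_scale_leq _ _)).
Qed.

Lemma mxdeg_leq_augmented d n k (P : 'M[{poly C}]_n) (U V : 'M[C]_(n, k)) Q1 Q2 :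
  mxdeg_leq d P -> mxdeg_leq d Q1 -> mxdeg_leq d Q2 ->
  mxdeg_leq d (augmented P U V Q1 Q2).
Proof.
move=> degP degQ1 degQ2 i j; rewrite /augmented -(splitK i) -(splitK j).
case: (split i) => i'; case: (split j) => j' /=.
- by rewrite block_mxEul.
- by rewrite block_mxEur mxdeg_leq_cmxl.
- by rewrite block_mxEdl mxdeg_leq_cmxr.
- by rewrite block_mxEdr mxE size_poly0.
Qed.

Lemma revmxD d m n (A B : 'M[{poly C}]_(m, n)) :
  revmx d (A + B) = revmx d A + revmx d B.
Proof. by apply/matrixP => i j; rewrite !mxE -/(revp d _) revpD. Qed.

Lemma revmx_cmxl d m n p (X : 'M[C]_(m, n)) (B : 'M[{poly C}]_(n, p)) :
  revmx d (cmx X *m B) = cmx X *m revmx d B.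
Proof.
apply/matrixP => i j; rewrite !mxE -/(revp d _) revp_sum.
by apply: eq_bigr => l _; rewrite !mxE revpCM.
Qed.

Lemma revmx_cmxr d m n p (B : 'M[{poly C}]_(m, n)) (X : 'M[C]_(n, p)) :
  revmx d (B *m cmx X) = revmx d B *m cmx X.
Proof.
apply/matrixP => i j; rewrite !mxE -/(revp d _) revp_sum.
by apply: eq_bigr => l _; rewrite !mxE mulrC revpCM mulrC.
Qed.

Lemma revmx_augmented d n k (P : 'M[{poly C}]_n) (U V : 'M[C]_(n, k)) Q1 Q2 :
  revmx d (augmented P U V Q1 Q2) = augmented (revmx d P) U V (revmx d Q1) (revmx d Q2).
Proof.
rewrite /augmented [LHS]map_block_mx.
rewrite -[map_mx _ (cmx U *m Q1)]/(revmx d _) -[map_mx _ (Q2 *m _)]/(revmx d _).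
rewrite revmx_cmxl revmx_cmxr; congr block_mx.
by apply/matrixP => i j; rewrite !mxE -/(revp d _) revp0.
Qed.

Lemma revmx_ptilde d n k (P : 'M[{poly C}]_n) (U V : 'M[C]_(n, k)) Q tau :
  revmx d (ptilde P U V Q tau) = ptilde (revmx d P) U V (revmx d Q) tau.
Proof. by rewrite /ptilde revmxD revmx_cmxr revmx_cmxl. Qed.

Lemma peval_revmx d m n (M : 'M[{poly C}]_(m, n)) z :
  mxdeg_leq d M -> z != 0 -> peval (revmx d M) z = z ^+ d *: peval M z^-1.
Proof.
by move=> degM nz_z; apply/matrixP => i j; rewrite !mxE -/(revp d _) horner_revp.
Qed.

Lemma regular_revmx d n (M : 'M[{poly C}]_n) :
  mxdeg_leq d M -> regular M -> regular (revmx d M).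
Proof.
move=> degM; apply: contraNN => /eqP revM0; apply/eqP.
apply: (@eq_poly_off_roots _ _ _ 'X) => [|z]; first by rewrite polyX_eq0.
rewrite rootX horner0 => nz_z; have nz_zV : z^-1 != 0 by rewrite invr_eq0.
have /eqP := congr1 (horner^~ z^-1) revM0.
rewrite horner0 horner_det peval_revmx // detZ -horner_det invrK mulf_eq0.
by rewrite (negPf (expf_neq0 _ (expf_neq0 _ nz_zV))) => /eqP.
Qed.

Lemma rank_peval_revmx d m n (M : 'M[{poly C}]_(m, n)) z :
  mxdeg_leq d M -> z != 0 -> (\rank (peval (revmx d M) z) <= nrank M)%N.
Proof.
move=> degM nz_z; rewrite peval_revmx //.
exact: leq_trans (mxrank_scale _ _) (rank_peval_le_nrank _ _).
Qed.

Lemma mult_augmented d n k (P : 'M[{poly C}]_n) (U V : 'M[C]_(n, k)) Q1 Q2 Q tau e :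
  mxdeg_is P d -> mxdeg_is Q1 d -> mxdeg_is Q2 d -> mxdeg_is Q d ->
  (k <= n)%N -> (nrank P <= n - k)%N ->
  regular (augmented P U V Q1 Q2) -> regular Q -> tau != 0 ->
  (mult d (augmented P U V Q1 Q2) e + mult d Q e =
   mult d Q1 e + mult d Q2 e + mult d (ptilde P U V Q tau) e)%N.
Proof.
move=> /mxdeg_is_leq degP /mxdeg_is_leq degQ1 /mxdeg_is_leq degQ2 /mxdeg_is_leq degQ.
move=> /subnK En; move: P U V degP; rewrite -{}En => P U V degP.
rewrite addnK => nrP regPa regQ nz_tau; case: e => [z|] /=.
  apply: (alg_mult_augmented z (oner_neq0 _)) => // w _.
  exact: leq_trans (rank_peval_le_nrank _ _) nrP.
(* the rank of a reversal is only controlled away from 0, hence [r := 'X] *)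
rewrite revmx_augmented revmx_ptilde.
apply: (alg_mult_augmented 0 (negbT (polyX_eq0 _))) => [w|||]; rewrite ?rootX.
- by move=> nz_w; apply: leq_trans (rank_peval_revmx degP nz_w) nrP.
- by rewrite -revmx_augmented; apply: regular_revmx regPa; apply: mxdeg_leq_augmented.
- exact: regular_revmx.
- exact: nz_tau.
Qed.

End AugmentedMatrixPolynomial.

Theorem proposition3p7 (C : numClosedFieldType) (n k d : nat)
  (P : 'M[{poly C}]_n) (Q1 Q2 Q : 'M[{poly C}]_k) (U V : 'M[C]_(n, k)) :
  mxdeg_is P d ->
  nrank P = (n - k)%N ->
  (forall e, pm_eigenvalue d P e -> semisimple d P e) ->
  regular Q1 -> mxdeg_is Q1 d ->
  regular Q2 -> mxdeg_is Q2 d ->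
  (forall e, (mult d Q1 e + mult d Q2 e <= 1)%N) ->
  adjmx U *m U = 1%:M -> adjmx V *m V = 1%:M ->
  regular (augmented P U V Q1 Q2) ->
  regular Q -> mxdeg_is Q d ->
  (forall e, (mult d Q e <= 1)%N) ->
  (forall e, (0 < mult d Q e)%N -> ~ pm_eigenvalue d P e) ->
  admissible d P U V Q ->
  forall tau : C, 0 < tau -> forall Rr Rl : seq (option C),
    adm_split d P U V Q tau Rr Rl ->
    forall e : option C,
      mult d (augmented P U V Q1 Q2) e =
      (mult d Q1 e + mult d Q2 e + ((e \in Rr) + (e \in Rl)) + mult d P e)%N.
Proof.
move=> degP nrP _ _ degQ1 _ degQ2 _ UU _ regPa regQ degQ _ _ _ tau tau_gt0 Rr Rl.
case=> [[_ [_ multPt]] _ _ _ _] e.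
have le_kn : (k <= n)%N.
  by rewrite -(mxrank1 C k) -UU (leq_trans (mxrankM_maxl _ _)) ?rank_leq_col.
have := mult_augmented e degP degQ1 degQ2 degQ le_kn (eq_leq nrP) regPa regQ
  (lt0r_neq0 tau_gt0).
rewrite multPt; lia.
Qed.
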